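(* Let $\mathcal{G}$ be a multi-layer graph with $l$ layers, $d,s,k\in\mathbb{N}$ with $k\ge1$, and $\mathcal{R}$ a collection of exactly $k$ subsets of $V(\mathcal{G})$. Let $L\subseteq\{1,\dots,l\}$, let $j\in L$ with $j>\max(\{1,\dots,l\}-L)$, and let $U$ be a potential vertex set for $L-\{j\}$, i.e., $U\subseteq V(\mathcal{G})$ with $C^d_S(\mathcal{G})\subseteq U$ for every $S$ with $|S|=s$ that equals $L-\{j\}$ or is a top-down descendant of $L-\{j\}$. If $|U|<\frac1k|\mathsf{Cov}(\mathcal{R})|+|\Delta(\mathcal{R},C^*(\mathcal{R}))|$, then every such $S$ satisfies $|\mathsf{Cov}((\mathcal{R}-\{C^*(\mathcal{R})\})\cup\{C^d_S(\mathcal{G})\})|<(1+\frac1k)|\mathsf{Cov}(\mathcal{R})|$.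
   Context: A multi-layer graph $\mathcal{G}=(V,E_1,\dots,E_l)$ consists of a finite vertex set $V$ and edge sets $E_i$ of simple undirected graphs $G_i=(V,E_i)$. A graph is $d$-dense if every vertex has degree at least $d$; the $d$-coherent core $C^d_L(\mathcal{G})$ is the unique maximal $S\subseteq V$ such that the induced subgraph $G_i[S]$ is $d$-dense for all $i\in L$. Top-down search tree: $L$ is the parent of $L'$ if $L'=L-\{\ell\}$ for some $\ell\in L$ with $\ell>\max(\{1,\dots,l\}-L)$ ($\max(\emptyset)=-\infty$); top-down descendants are obtained by iterating the child relation. For a collection $\mathcal{R}$ of sets, $\mathsf{Cov}(\mathcal{R})=\bigcup_{R\in\mathcal{R}}R$; for $C'\in\mathcal{R}$, $\Delta(\mathcal{R},C')=C'-\mathsf{Cov}(\mathcal{R}-\{C'\})$; $C^*(\mathcal{R})$ is a fixed element of $\mathcal{R}$ minimizing $|\Delta(\mathcal{R},C')|$. *)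

From mathcomp Require Import all_boot all_order all_algebra.
Set Implicit Arguments. Unset Strict Implicit. Unset Printing Implicit Defensive.

(* A multi-layer graph with l layers on the finite vertex set V: layer i
   (i : 'I_l, standing for layer i+1 of the paper) is a simple undirected
   graph given by a symmetric irreflexive relation E i. *)
Record mlgraph (V : finType) (l : nat) := MLGraph {
  layer : 'I_l -> rel V;
  layer_sym : forall i, symmetric (layer i);
  layer_irr : forall i, irreflexive (layer i)
}.

Section Defs.
Variables (V : finType) (l : nat) (G : mlgraph V l).

Definition dense_in (i : 'I_l) (d : nat) (S : {set V}) : bool :=
  [forall v in S, d <= #|[set u in S | layer G i v u]|].

Definition coherent (L : {set 'I_l}) (d : nat) (S : {set V}) : bool :=
  [forall i in L, dense_in i d S].

(* the d-coherent core C^d_L(G): the maximal S that is d-dense in all layers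
   of L, realised as the union of all such sets (which is itself such a set). *)
Definition core (d : nat) (L : {set 'I_l}) : {set V} :=
  \bigcup_(S | coherent L d S) S.

Definition td_child (L L' : {set 'I_l}) : bool :=
  [exists ell in L, (L' == L :\ ell) && [forall i in ~: L, i < ell]].

Definition td_desc_or_eq (L S : {set 'I_l}) : bool := connect td_child L S.
End Defs.

Section Cov.
Variable (V : finType).
Definition Cov (R : {set {set V}}) : {set V} := \bigcup_(X in R) X.
Definition Delta (R : {set {set V}}) (C : {set V}) : {set V} :=
  C :\: Cov (R :\ C).
Definition is_Cstar (R : {set {set V}}) (C : {set V}) : Prop :=
  C \in R /\ forall C', C' \in R -> #|Delta R C| <= #|Delta R C'|.
End Cov.

From mathcomp Require Import all_boot all_order all_algebra.
From mathcomp Require Import lra.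
Set Implicit Arguments. Unset Strict Implicit. Unset Printing Implicit Defensive.
Import GRing.Theory Num.Theory.
Local Open Scope ring_scope.

(* Replacing [Cs] = C^*(R) in R by the core C^d_S loses exactly the vertices
   of Delta(R, Cs) and gains at most |C^d_S| <= |U| vertices, so the new
   cover has at most |Cov(R)| - |Delta(R, Cs)| + |U| < (1 + 1/k) |Cov(R)|
   vertices. *)

Section Cover.
Variable V : finType.
Implicit Types (R : {set {set V}}) (C X : {set V}).

Lemma Cov_setD1 R C : C \in R -> Cov R = C :|: Cov (R :\ C).
Proof. by move=> CR; rewrite -{1}(setD1K CR) /Cov bigcup_setU big_set1. Qed.

Lemma card_Cov_Delta R C :
  C \in R -> #|Cov R| = (#|Cov (R :\ C)| + #|Delta R C|)%N.
Proof.
move=> CR; rewrite (Cov_setD1 CR) /Delta.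
set X := Cov (R :\ C).
rewrite -(cardsID X (C :|: X)) setDUl setDv setU0.
by rewrite (setIidPr (subsetUr C X)).
Qed.

Lemma card_Cov_replace R C X : C \in R ->
  (#|Cov ((R :\ C) :|: [set X])| + #|Delta R C| <= #|Cov R| + #|X|)%N.
Proof.
move=> CR; rewrite (card_Cov_Delta CR) /Cov bigcup_setU big_set1.
by rewrite addnAC leq_add2r leq_card_setU.
Qed.

End Cover.

Theorem lemma6 (V : finType) (l : nat) (G : mlgraph V l) (d s k : nat)
  (R : {set {set V}}) (Cs : {set V}) (L : {set 'I_l}) (j : 'I_l) (U : {set V}) :
  (1 <= k)%N -> #|R| = k -> is_Cstar R Cs ->
  j \in L -> (forall i : 'I_l, i \notin L -> (i < j)%N) ->
  (forall S : {set 'I_l}, #|S| = s -> td_desc_or_eq (L :\ j) S ->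
     core G d S \subset U) ->
  (#|U|%:R : rat) < (#|Cov R|)%:R / k%:R + (#|Delta R Cs|)%:R ->
  forall S : {set 'I_l}, #|S| = s -> td_desc_or_eq (L :\ j) S ->
    (#|Cov ((R :\ Cs) :|: [set core G d S])|%:R : rat)
      < (1 + 1 / k%:R) * (#|Cov R|)%:R.
Proof.
move=> _ _ [CsR _] _ _ core_sub_U U_small S sizeS descS.
have replace_le := card_Cov_replace (core G d S) CsR.
have core_le_U := subset_leq_card (core_sub_U S sizeS descS).
move: replace_le core_le_U; rewrite -!(ler_nat rat) !natrD.
rewrite mulrDl mul1r mul1r mulrC.
lra.
Qed.
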